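(* Let $(T,D)$ be a predominated tree. Staller wins the MBD game on $(T,D)$ if and only if $T$ contains a substructure $F\in\mathcal S$ such that $X(F)\cap D=\emptyset$.
   Context: A predominated graph is a pair $(G,D)$ with $G$ a finite simple graph and $D\subseteq V(G)$. In the MBD game on $(G,D)$, Staller and Dominator alternately claim unclaimed vertices of $V(G)$ (including vertices of $D$), Staller first, until all vertices are claimed; Staller wins if she claims all of $N_G[v]$ for some $v\in V(G)\setminus D$, and Dominator wins otherwise. For a tree $T$, $S(T)$ is obtained by subdividing each edge of $T$ exactly once; $\mathcal S=\{S(T):T\text{ a tree}\}$ and $X(S(T))=V(T)$ (with $S(P_1)=P_1$, $X(P_1)=V(P_1)$). $F\in\mathcal S$ is a substructure in $G$ if $F$ is a subgraph of $G$ and $\deg_G(v)=\deg_F(v)$ for every $v\in X(F)$. *)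

From HB Require Import structures.
From mathcomp Require Import all_boot.
Set Implicit Arguments. Unset Strict Implicit. Unset Printing Implicit Defensive.

Definition simple_graph (V : finType) (e : rel V) : Prop :=
  symmetric e /\ irreflexive e.

Definition connected_graph (V : finType) (e : rel V) : Prop :=
  forall x y : V, connect e x y.

Definition acyclic_graph (V : finType) (e : rel V) : Prop :=
  forall p : seq V, uniq p -> 3 <= size p -> ~~ cycle e p.

Definition is_tree (V : finType) (e : rel V) : Prop :=
  [/\ simple_graph e, 0 < #|V|, connected_graph e & acyclic_graph e].

Definition cnbhd (V : finType) (e : rel V) (v : V) : {set V} :=
  [set u | (u == v) || e v u].

Definition deg (V : finType) (e : rel V) (v : V) : nat := #|[set u | e v u]|.

Definition staller_won (V : finType) (e : rel V) (D S : {set V}) : bool :=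
  [exists v, (v \notin D) && (cnbhd e v \subset S)].

(* staller_wins_from n S Dm sturn: Staller has a winning strategy from the
   position where Staller owns S, Dominator owns Dm, and it is Staller's turn
   iff sturn; n is fuel (number of remaining moves is at most #|V|). *)
Fixpoint staller_wins_from (V : finType) (e : rel V) (D : {set V}) (n : nat)
    (S Dm : {set V}) (sturn : bool) : bool :=
  let U := ~: (S :|: Dm) in
  match n with
  | 0 => staller_won e D S
  | n'.+1 =>
      if U == set0 then staller_won e D S
      else if sturn then
        [exists x in U, staller_wins_from e D n' (x |: S) Dm false]
      else
        [forall x in U, staller_wins_from e D n' S (x |: Dm) true]
  end.

Definition staller_wins_MBD (V : finType) (e : rel V) (D : {set V}) : bool :=
  staller_wins_from e D #|V| set0 set0 true.

(* edges of (A, r), each unordered edge represented once *)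
Definition sub_edge (A : finType) (r : rel A) : predArgType :=
  {p : A * A | r p.1 p.2 && (enum_rank p.1 < enum_rank p.2)}.

(* S(A): vertices V(A) (inl) plus one subdivision vertex per edge (inr);
   X(S(A)) = the inl vertices. *)
Definition sdiv_rel (A : finType) (r : rel A) : rel (A + sub_edge r) :=
  fun x y =>
    match x, y with
    | inl a, inr p => (a == (val p).1) || (a == (val p).2)
    | inr p, inl a => (a == (val p).1) || (a == (val p).2)
    | _, _ => false
    end.

(* h : V(S(A)) -> V(G) embeds F = S(A) (A a tree) as a subgraph of G
   (injective, adjacency-preserving), and it is a substructure: each
   X-vertex has the same degree in G as in F. *)
Definition S_substructure (V : finType) (e : rel V) (A : finType) (r : rel A)
    (h : A + sub_edge r -> V) : Prop :=
  [/\ is_tree r, injective h,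
      (forall x y, @sdiv_rel A r x y -> e (h x) (h y)) &
      (forall a : A, deg e (h (inl a)) = deg (@sdiv_rel A r) (inl a))].

From HB Require Import structures.
From mathcomp Require Import all_boot.
Set Implicit Arguments. Unset Strict Implicit. Unset Printing Implicit Defensive.

(* If [F = S(T')] is a substructure with [X(F)] outside [D], Staller peels the
   leaves of [T']: she claims the subdivision vertex between a leaf [x] and its
   neighbour; if Dominator does not answer on [x], Staller claims [x] and owns
   [N[x]], as [x] has the same degree in [T] as in [F]; otherwise [x] is
   discarded. Conversely, let [y] be a vertex of degree at least 2 with at most
   one such neighbour; its other neighbours are pendant. A pendant neighbour in
   [D] is deleted and [y] is put into [D]; two pendant neighbours outside [D]
   form an [S(P_2)]; a single one is matched with [y] and both are deleted.
   By induction either a substructure exists or some matching covers every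
   vertex outside [D], and Dominator then wins by answering each move of
   Staller with its partner. *)

Definition nbrs (T : finType) (r : rel T) (R : {set T}) (x : T) : {set T} :=
  [set u in R | r x u].

Lemma nbrsE (T : finType) (r : rel T) (R : {set T}) x u :
  (u \in nbrs r R x) = (u \in R) && r x u.
Proof. by rewrite inE. Qed.

Lemma next_neq_prev (T : eqType) (p : seq T) (x : T) :
  uniq p -> 3 <= size p -> x \in p -> next p x != prev p x.
Proof.
move=> U S xp; case: (rot_to xp) => i s E.
have U' : uniq (x :: s) by rewrite -E rot_uniq.
have S' : 3 <= size (x :: s) by rewrite -E size_rot.
rewrite -(next_rot i U) -(prev_rot i U) E; apply/eqP => Heq.
have : next (x :: s) (next (x :: s) x) = x by rewrite {1}Heq next_prev.
case: s U' S' {Heq E} => [|a [|b s]] // U' _.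
rewrite [next _ x]next_nth mem_head /= eqxx /=.
move: U' => /= /andP[]; rewrite !inE !negb_or => /andP[xa /andP[xb _]] _.
rewrite eq_sym (negbTE xa) /= eqxx /= => E.
by move: xb; rewrite E eqxx.
Qed.

Section Forest.
Variables (T : finType) (r : rel T).
Hypotheses (rsym : symmetric r) (rirr : irreflexive r).

Lemma uniq_path_extend (R : {set T}) (l : T) (s : seq T) :
  (forall x, x \in R -> 1 < #|nbrs r R x|) -> acyclic_graph r ->
  uniq (l :: s) -> all (mem R) (l :: s) -> path r l s ->
  exists2 w, w \notin l :: s & (w \in R) && r l w.
Proof.
move=> deg2 racyc U A P.
have lR : l \in R by case/andP: A.
have [w [wR lw wpl]] : exists w, [/\ w \in R, r l w &
    (if s is pl :: _ then w != pl else true)].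
  have /card_gt1P [w1 [w2 []]] := deg2 l lR.
  rewrite !nbrsE => /andP[w1R lw1] /andP[w2R lw2] w12.
  case: s {U A P} => [|pl s]; first by exists w1.
  case: (eqVneq w1 pl) => [e1|n1]; last by exists w1.
  by exists w2; split => //; rewrite -e1 eq_sym.
exists w; rewrite ?wR ?lw //; apply/negP; rewrite inE => /orP[/eqP wl|ws].
  by move: lw; rewrite wl rirr.
case: s ws wpl U P {A} => [//|pl s] ws wpl U P.
move: ws; rewrite inE (negbTE wpl) /= => ws.
case/splitPr: ws U P => p1 p2 U P.
(* a second neighbour of [l] further along the path closes a cycle *)
apply: (negP (racyc (l :: rcons (pl :: p1) w) _ _)).
- have E : l :: pl :: p1 ++ w :: p2 = rcons (l :: pl :: p1) w ++ p2.
    by rewrite -cats1 -catA.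
  by move: U; rewrite E cat_uniq => /andP[].
- by rewrite /= size_rcons.
- rewrite /cycle rcons_path rcons_path.
  move: P; rewrite -cat_cons cat_path => /andP[P1 P2].
  rewrite P1 /=; move: P2 => /= /andP[-> _] /=.
  by rewrite last_rcons rsym lw.
Qed.

Lemma forest_leaf (R : {set T}) : acyclic_graph r -> R != set0 ->
  exists2 x, x \in R & #|nbrs r R x| <= 1.
Proof.
move=> racyc R0.
have [/exists_inP[x xR H]|/exists_inPn H] :=
  boolP [exists x in R, #|nbrs r R x| <= 1]; first by exists x.
have deg2 x : x \in R -> 1 < #|nbrs r R x| by move/H; rewrite -ltnNge.
suff long_path k : exists l s, [/\ uniq (l :: s), all (mem R) (l :: s),
    size s = k & path r l s].
  have [l [s [U _ S _]]] := long_path #|T|.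
  by have := max_card (mem (l :: s)); rewrite (card_uniqP U) /= S ltnn.
elim: k => [|k [l [s [U A S P]]]].
  by case/set0Pn: R0 => x xR; exists x, [::]; split; rewrite //= xR.
have [w ws /andP[wR lw]] := uniq_path_extend deg2 racyc U A P.
exists w, (l :: s); split => //=; first by rewrite ws.
- by rewrite wR.
- by rewrite S.
- by rewrite rsym lw.
Qed.

Lemma acyclic_of_leaves :
  (forall R : {set T}, R != set0 -> exists2 x, x \in R & #|nbrs r R x| <= 1) ->
  acyclic_graph r.
Proof.
move=> leaf p U S; apply/negP => C.
have p0 : [set x in p] != set0.
  by case: p S {U C} => [|a p] // _; apply/set0Pn; exists a; rewrite inE mem_head.
have [x] := leaf _ p0; rewrite inE => xp.
apply/negP; rewrite -ltnNge; apply/card_gt1P.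
exists (next p x), (prev p x); split.
- by rewrite !inE mem_next xp next_cycle.
- by rewrite !inE mem_prev xp rsym prev_cycle.
- exact: next_neq_prev.
Qed.

Lemma forest_common_nbr_uniq a b u u' : acyclic_graph r -> a != b ->
  r a u -> r u b -> r a u' -> r u' b -> u = u'.
Proof.
move=> racyc ab au ub au' u'b; apply/eqP; apply: contraT => uu'.
have neq x y : r x y -> x != y by move=> xy; apply: contraTneq xy => ->; rewrite rirr.
have := racyc [:: a; u; b; u']; rewrite /= !inE !negb_or.
rewrite neq // ab neq // (neq u) // uu' eq_sym neq // au ub rsym u'b rsym au'.
by move=> /(_ isT isT).
Qed.

End Forest.

Section Game.
Variables (V : finType) (e : rel V) (D : {set V}).

Lemma unclaimed_claimS (S Dm : {set V}) x : ~: ((x |: S) :|: Dm) = ~: (S :|: Dm) :\ x.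
Proof. by rewrite -setUA setCU setDE setIC. Qed.

Lemma unclaimed_claimD (S Dm : {set V}) x : ~: (S :|: (x |: Dm)) = ~: (S :|: Dm) :\ x.
Proof. by rewrite setUCA setCU setDE setIC. Qed.

Lemma staller_wins_from_won n (S Dm : {set V}) st :
  staller_won e D S -> staller_wins_from e D n S Dm st.
Proof.
elim: n S Dm st => [//|n IH] S Dm st Hw /=.
case: ifP => // /set0Pn [x xU]; case: st; last by apply/forall_inP => y _; apply: IH.
apply/exists_inP; exists x => //; apply: IH.
case/existsP: Hw => v /andP[vD sub]; apply/existsP; exists v.
by rewrite vD /= (subset_trans sub) // subsetUr.
Qed.

Lemma staller_wins_claim n (S Dm : {set V}) m :
  m \in ~: (S :|: Dm) -> ~: (S :|: Dm) :\ m != set0 ->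
  (forall u, u \in ~: (S :|: Dm) :\ m -> staller_wins_from e D n (m |: S) (u |: Dm) true) ->
  staller_wins_from e D n.+2 S Dm true.
Proof.
move=> mU U'0 reply /=; case: ifP => [/eqP U0|_]; first by rewrite U0 inE in mU.
apply/exists_inP; exists m => //; rewrite unclaimed_claimS (negbTE U'0).
by apply/forall_inP.
Qed.

End Game.

(* An involution encoding a matching inside [W] that covers [W :\: D];
   unpaired vertices are its fixed points. *)
Definition pairing (V : finType) (e : rel V) (D W : {set V}) (p : V -> V) :=
  [/\ involutive p, forall a, p a != a -> (a \in W) && e a (p a)
    & forall v, v \in W -> v \notin D -> p v != v].

Section PairingStrategy.
Variables (V : finType) (e : rel V) (D : {set V}) (p : V -> V).
Hypothesis pairing_p : pairing e D setT p.

Lemma not_won_of_unpaired (S : {set V}) :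
  (forall a, a \in S -> p a != a -> p a \notin S) -> ~~ staller_won e D S.
Proof.
case: pairing_p => _ edge cover NP; apply/existsP => [[v /andP[vD sub]]].
have pv := cover v (in_setT v) vD.
have vS : v \in S by apply: (subsetP sub); rewrite inE eqxx.
have pvS : p v \in S.
  by apply: (subsetP sub); rewrite inE; case/andP: (edge v pv) => _ ->; rewrite orbT.
by move: (NP v vS pv); rewrite pvS.
Qed.

Definition pairing_inv (S Dm : {set V}) :=
  (forall a, a \in S -> a \notin Dm) /\ (forall a, a \in S -> p a != a -> p a \in Dm).

Lemma pairing_inv_unpaired S Dm :
  pairing_inv S Dm -> forall a, a \in S -> p a != a -> p a \notin S.
Proof.
move=> [dis H] a aS pa; apply/negP => paS.
by move: (H a aS pa) (dis _ paS) => ->.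
Qed.

Lemma pairing_inv_claim_unpaired S Dm x : pairing_inv S Dm -> x \notin S -> x \notin Dm ->
  forall a, a \in x |: S -> p a != a -> p a \notin x |: S.
Proof.
case: pairing_p => inv _ _ [dis H] xS xD a; rewrite !inE => /orP[/eqP ->|aS] pa.
  apply/negP => /orP[/eqP E|pxS]; first by rewrite E eqxx in pa.
  by have := H _ pxS; rewrite inv eq_sym => /(_ pa); rewrite (negbTE xD).
have paD := H a aS pa; rewrite negb_or; apply/andP; split.
  by apply: contraNneq xD => <-.
by apply/negP => /dis; rewrite paD.
Qed.

Lemma pairing_inv_reply S Dm x u : pairing_inv S Dm -> x \notin Dm ->
  u \in ~: (x |: S :|: Dm) -> (p x != x -> p x \in u |: Dm) ->
  pairing_inv (x |: S) (u |: Dm).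
Proof.
move=> [dis H] xD; rewrite !inE !negb_or => /andP[/andP[ux uS] uD] Hx; split.
  move=> a; rewrite !inE => /orP[/eqP ->|aS]; first by rewrite negb_or xD andbT eq_sym.
  by rewrite negb_or dis // andbT; apply: contraNneq uS => <-.
by move=> a; rewrite !inE => /orP[/eqP ->|aS] pa; rewrite ?Hx // H ?orbT.
Qed.

Lemma pairing_strategy n :
  (forall S Dm, pairing_inv S Dm -> ~~ staller_wins_from e D n S Dm true) /\
  (forall S Dm x, pairing_inv S Dm -> x \notin S -> x \notin Dm ->
     ~~ staller_wins_from e D n (x |: S) Dm false).
Proof.
case: pairing_p => inv _ _.
elim: n => [|n [IH1 IH2]]; split.
- by move=> S Dm I; apply: not_won_of_unpaired; apply: pairing_inv_unpaired I.
- by move=> S Dm x I xS xD; apply: not_won_of_unpaired; apply: pairing_inv_claim_unpaired I xS xD.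
- move=> S Dm I /=; case: ifP => _.
    by apply: not_won_of_unpaired; apply: pairing_inv_unpaired I.
  apply/exists_inP => [[x]]; rewrite !inE negb_or => /andP[xS xD].
  by apply/negP; apply: IH2.
- move=> S Dm x I xS xD /=; case: ifP => [_|/negbT /set0Pn [y yU]].
    by apply: not_won_of_unpaired; apply: pairing_inv_claim_unpaired I xS xD.
  set U := ~: (x |: S :|: Dm).
  pose u := if (p x != x) && (p x \in U) then p x else y.
  have uU : u \in U by rewrite /u; case: ifP => // /andP[].
  apply/forall_inP => /(_ u uU); apply/negP; apply: IH1.
  apply: pairing_inv_reply => // pxx; rewrite /u pxx /=.
  case: ifP => [_|]; first by rewrite setU11.
  rewrite /U !inE !negb_or => /negbT; rewrite !negb_and !negbK.
  case/orP => [/orP[/eqP E|pxS]|->]; rewrite ?orbT //; first by rewrite E eqxx in pxx.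
  by have := I.2 _ pxS; rewrite inv eq_sym => /(_ pxx); rewrite (negbTE xD).
Qed.

Lemma pairing_dominator_wins : ~~ staller_wins_MBD e D.
Proof. by apply: (pairing_strategy _).1; split=> a; rewrite inE. Qed.

End PairingStrategy.

Section SubdivisionEdges.
Variables (A : finType) (r : rel A).
Hypotheses (rsym : symmetric r) (rirr : irreflexive r).

Definition edges_at (a : A) : {set sub_edge r} :=
  [set p | (a == (val p).1) || (a == (val p).2)].

Definition other_end (p : sub_edge r) (a : A) : A :=
  if (val p).1 == a then (val p).2 else (val p).1.

Lemma edge_rel (p : sub_edge r) : r (val p).1 (val p).2.
Proof. by case/andP: (valP p). Qed.

Lemma edges_at_ends p a : p \in edges_at a ->
  ((val p).1 = a /\ (val p).2 = other_end p a) \/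
  ((val p).2 = a /\ (val p).1 = other_end p a).
Proof.
rewrite inE /other_end => /orP[/eqP E|/eqP E]; first by left; rewrite -E eqxx.
right; split => //; case: ifP => [/eqP E'|] //.
by have := edge_rel p; rewrite E' -E rirr.
Qed.

Lemma other_end_rel p a : p \in edges_at a -> r a (other_end p a).
Proof.
by case/edges_at_ends => [[<- <-]|[<- <-]]; rewrite ?edge_rel // rsym edge_rel.
Qed.

Lemma other_end_neq p a : p \in edges_at a -> other_end p a != a.
Proof. by move/other_end_rel; apply: contraTneq => ->; rewrite rirr. Qed.

Lemma edges_at_inj p q a : p \in edges_at a -> q \in edges_at a ->
  other_end p a = other_end q a -> p = q.
Proof.
move=> pa qa E; apply: val_inj.
have lt_ends (s : sub_edge r) : enum_rank (val s).1 < enum_rank (val s).2.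
  by case/andP: (valP s).
case: (edges_at_ends pa) (edges_at_ends qa) (lt_ends p) (lt_ends q) => [[p1 p2]|[p2 p1]]
  [[q1 q2]|[q2 q1]]; case: (val p) (val q) p1 p2 q1 q2 => [x y] [x' y'] /= -> -> -> ->;
  rewrite E // => lt lt'; by move: (ltn_trans lt lt'); rewrite ltnn.
Qed.

Lemma edges_at_exists a b : r a b -> exists2 q, q \in edges_at a & other_end q a = b.
Proof.
move=> rab; have ab : a != b by apply: contraTneq rab => ->; rewrite rirr.
have rk : enum_rank a != enum_rank b by apply: contra ab => /eqP /enum_rank_inj ->.
case: (ltngtP (enum_rank a) (enum_rank b)) => [lt|gt|/val_inj E]; last by rewrite E eqxx in rk.
- have H : r (a, b).1 (a, b).2 && (enum_rank (a, b).1 < enum_rank (a, b).2) by rewrite /= rab lt.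
  exists (exist _ (a, b) H : sub_edge r); first by rewrite inE /= eqxx.
  by rewrite /other_end /= eqxx.
- have H : r (b, a).1 (b, a).2 && (enum_rank (b, a).1 < enum_rank (b, a).2).
    by rewrite /= rsym rab gt.
  exists (exist _ (b, a) H : sub_edge r); first by rewrite inE /= eqxx orbT.
  by rewrite /other_end /= eq_sym (negbTE ab).
Qed.

Lemma sdiv_nbrs_inl a : [set z | sdiv_rel (inl a) z] = inr @: edges_at a.
Proof.
apply/setP => [[b|p]]; rewrite inE /=; first by apply/esym/imsetP => [[p _]].
apply/idP/imsetP => [H|[q qa [->]]]; first by exists p; rewrite ?inE.
by rewrite inE in qa.
Qed.

End SubdivisionEdges.

Section StallerStrategy.
Variables (V : finType) (e : rel V) (D : {set V}).
Variables (A : finType) (r : rel A) (h : A + sub_edge r -> V).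
Hypotheses (rsym : symmetric r) (rirr : irreflexive r) (racyc : acyclic_graph r).
Hypotheses (hinj : injective h) (hadj : forall x y, sdiv_rel x y -> e (h x) (h y))
  (hdeg : forall a : A, deg e (h (inl a)) = deg (@sdiv_rel A r) (inl a))
  (hD : forall a, h (inl a) \notin D).

Local Notation F a := (h (inl a)).
Local Notation M p := (h (inr p)).

Lemma hinr_inj : injective (fun p => M p).
Proof. by move=> p q /hinj [->]. Qed.

Lemma nbrs_hinl a : [set u | e (F a) u] = [set M p | p in edges_at r a].
Proof.
apply/esym/eqP; rewrite eqEcard; apply/andP; split.
  by apply/subsetP => u /imsetP [p pa ->]; rewrite inE; apply: hadj; rewrite inE in pa.
rewrite card_imset; last exact: hinr_inj.
have -> : #|[set u | e (F a) u]| = deg e (F a) by [].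
by rewrite hdeg /deg sdiv_nbrs_inl card_imset //; move=> x y [].
Qed.

Lemma win_by_closing a n (S Dm : {set V}) : F a \in ~: (S :|: Dm) ->
  #|~: (S :|: Dm)| <= n -> (forall p, p \in edges_at r a -> M p \in S) ->
  staller_wins_from e D n S Dm true.
Proof.
move=> FU Hn HS; case: n Hn => [|n] Hn.
  by move: Hn; rewrite leqn0 cards_eq0 => /eqP E; rewrite E inE in FU.
rewrite /=; case: ifP => [/eqP E|_]; first by rewrite E inE in FU.
apply/exists_inP; exists (F a) => //; apply: staller_wins_from_won.
apply/existsP; exists (F a); rewrite hD /=; apply/subsetP => u.
rewrite !inE => /orP[->//|eu]; have : u \in [set u | e (F a) u] by rewrite inE.
by rewrite nbrs_hinl => /imsetP [p pa ->]; rewrite HS ?orbT.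
Qed.

(* [R] is the part of the copy of [S(A)] still to be fought over: its vertices
   and inner subdivision vertices are free, and Staller owns every subdivision
   vertex on its boundary. *)
Definition peel_inv (R : {set A}) (S Dm : {set V}) :=
  [/\ forall a, a \in R -> F a \in ~: (S :|: Dm),
      forall p : sub_edge r, (val p).1 \in R -> (val p).2 \in R -> M p \in ~: (S :|: Dm)
    & forall p : sub_edge r, ((val p).1 \in R) != ((val p).2 \in R) -> M p \in S].

Lemma peel_inv_boundary R S Dm a p : peel_inv R S Dm -> a \in R ->
  p \in edges_at r a -> other_end p a \notin R -> M p \in S.
Proof.
case=> _ _ I3 aR pa oR; apply: I3.
by case: (edges_at_ends rirr pa) => [[-> ->]|[-> ->]]; rewrite aR (negbTE oR).
Qed.

Lemma peel_inv_remove_leaf R S Dm a q : peel_inv R S Dm -> a \in R ->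
  q \in edges_at r a -> other_end q a \in R ->
  (forall c, c \in R -> r a c -> c = other_end q a) ->
  peel_inv (R :\ a) (M q |: S) (F a |: Dm).
Proof.
move=> [I1 I2 I3] aR qa bR leaf.
have free_at x : x != M q -> x != F a -> x \in ~: (S :|: Dm) ->
    x \in ~: (M q |: S :|: (F a |: Dm)).
  by move=> xq xa; rewrite !inE !negb_or xq xa.
split.
- move=> c; rewrite in_setD1 => /andP[ca cR]; apply: free_at (I1 c cR).
  + by apply/eqP => /hinj.
  + by apply: contra ca => /eqP /hinj [->].
- move=> p; rewrite !in_setD1 => /andP[p1a p1R] /andP[p2a p2R].
  apply: free_at (I2 p p1R p2R); last by apply/eqP => /hinj.
  apply/eqP => /hinj [Epq]; move: p1a p2a; rewrite Epq.
  by case: (edges_at_ends rirr qa) => [[-> _]|[-> _]]; rewrite eqxx.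
- move=> p Hp; rewrite in_setU1.
  have [pa|pa] := boolP (p \in edges_at r a).
    suff -> : p = q by rewrite eqxx.
    apply: (edges_at_inj rirr pa qa); apply: leaf (other_end_rel rsym rirr pa).
    by move: Hp; case: (edges_at_ends rirr pa) => [[-> <-]|[-> <-]];
      rewrite !in_setD1 eqxx /=; case: (_ \in R); rewrite ?andbF.
  rewrite I3 ?orbT //; move: Hp pa; rewrite !in_setD1 inE negb_or.
  by rewrite ![a == _]eq_sym => Hp /andP[p1 p2]; rewrite p1 p2 in Hp.
Qed.

(* Staller claims the subdivision vertex between the leaf [a] and its neighbour;
   unless Dominator answers on [a], claiming [a] next closes [N[a]]. *)
Lemma peel_leaf_step R S Dm n a q : peel_inv R S Dm -> a \in R ->
  q \in edges_at r a -> other_end q a \in R ->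
  (forall c, c \in R -> r a c -> c = other_end q a) -> #|~: (S :|: Dm)| <= n ->
  (forall S' Dm', peel_inv (R :\ a) S' Dm' -> #|~: (S' :|: Dm')| <= n.-2 ->
     staller_wins_from e D n.-2 S' Dm' true) ->
  staller_wins_from e D n S Dm true.
Proof.
move=> I aR qa bR leaf Hn IH; have [I1 I2 _] := I; have FaU := I1 a aR.
have MqU : M q \in ~: (S :|: Dm).
  by case: (edges_at_ends rirr qa) => [[E1 E2]|[E1 E2]]; apply: I2; rewrite ?E1 ?E2.
have MF : M q != F a by apply/eqP => /hinj.
set U := ~: (S :|: Dm) in MqU FaU Hn *.
have U2 : 1 < #|U| by apply/card_gt1P; exists (M q), (F a).
case: n Hn IH => [|[|n]] Hn IH; try by move: (leq_trans U2 Hn).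
apply: (staller_wins_claim MqU).
  by apply/set0Pn; exists (F a); rewrite in_setD1 eq_sym MF FaU.
move=> u /setD1P [uMq uU].
have U' : ~: (M q |: S :|: (u |: Dm)) = U :\ M q :\ u.
  by rewrite unclaimed_claimD unclaimed_claimS.
have hn : #|~: (M q |: S :|: (u |: Dm))| <= n.
  by move: Hn; rewrite U' (cardsD1 (M q)) MqU (cardsD1 u) in_setD1 uMq uU.
have [Eu|uF] := eqVneq u (F a).
  by subst u; apply: IH hn; apply: peel_inv_remove_leaf.
apply: (@win_by_closing a n _ _ _ hn); first by rewrite U' !in_setD1 eq_sym uF eq_sym MF FaU.
move=> p pa; rewrite in_setU1; have [->|pq] := eqVneq p q; first by rewrite eqxx.
rewrite (peel_inv_boundary I aR pa) ?orbT //; apply/negP => oR.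
by move: pq; rewrite (edges_at_inj rirr pa qa) ?eqxx // (leaf _ oR)
  ?(other_end_rel rsym rirr pa).
Qed.

Lemma peel_strategy k (R : {set A}) (S Dm : {set V}) n : #|R| <= k -> R != set0 ->
  peel_inv R S Dm -> #|~: (S :|: Dm)| <= n -> staller_wins_from e D n S Dm true.
Proof.
elim: k R S Dm n => [|k IH] R S Dm n Rk R0 I Hn.
  by move: Rk R0; rewrite leqn0 cards_eq0 => ->.
have [a aR Ha] := forest_leaf rsym rirr racyc R0.
have [Na0|[b]] := set_0Vmem (nbrs r R a).
  case: (I) => I1 _ _; apply: (win_by_closing (I1 a aR) Hn) => p pa; apply: (peel_inv_boundary I aR pa).
  apply/negP => oR; have : other_end p a \in nbrs r R a.
    by rewrite nbrsE oR (other_end_rel rsym rirr pa).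
  by rewrite Na0 inE.
rewrite nbrsE => /andP[bR rab]; have [q qa oq] := edges_at_exists rsym rirr rab.
apply: (peel_leaf_step I aR qa); rewrite ?oq //.
  by move=> c cR rac; apply: (card_le1_eqP Ha); rewrite nbrsE ?cR ?bR.
move=> S' Dm' I' Hn'; apply: IH I' Hn'; first by move: Rk; rewrite (cardsD1 a) aR.
apply/set0Pn; exists b; rewrite !inE bR andbT.
by apply: contraTneq rab => ->; rewrite rirr.
Qed.

Lemma staller_wins_of_substructure : 0 < #|A| -> staller_wins_MBD e D.
Proof.
move=> A0; apply: (@peel_strategy #|A| setT); rewrite ?cardsT ?max_card //.
  by apply/set0Pn; have [x _] := card_gt0P A0; exists x; rewrite inE.
by split=> [a|p|p]; rewrite !inE.
Qed.

End StallerStrategy.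

Section Dichotomy.
Variables (V : finType) (e : rel V).
Hypotheses (esym : symmetric e) (eirr : irreflexive e) (eacyc : acyclic_graph e).

Definition dist2 (X : {set V}) : rel V :=
  fun a b => [&& a \in X, b \in X, a != b & [exists u, e a u && e u b]].

(* Inside the forest induced on [W], the vertices of [X] together with their
   neighbours form a copy of [S(T)] whose [X]-part avoids [D]: [T] is the
   graph [dist2 X], and every neighbour of [X] is a subdivision vertex. *)
Definition skeleton (W D X : {set V}) :=
  [/\ X \subset W :\: D, X != set0,
      (forall x u, x \in X -> u \in W -> e x u ->
          (u \notin X) && (#|nbrs e X u| == 2))
    & (forall a b, a \in X -> b \in X -> connect (dist2 X) a b)].

Lemma dist2_sym (X : {set V}) : symmetric (dist2 X).
Proof.
move=> a b; apply/and4P/and4P => [][? ? ? /existsP[u /andP[h1 h2]]];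
  split => //; rewrite 1?eq_sym //; apply/existsP; exists u; by rewrite esym h2 esym h1.
Qed.

Lemma dist2_sub (X Y : {set V}) : X \subset Y -> subrel (dist2 X) (connect (dist2 Y)).
Proof.
move=> XY a b /and4P[aX bX ab ex]; apply: connect1.
by rewrite /dist2 (subsetP XY _ aX) (subsetP XY _ bX) ab ex.
Qed.

Lemma dist2_connect_setU1 (X : {set V}) x w0 : w0 \in X -> dist2 (x |: X) x w0 ->
  (forall a b, a \in X -> b \in X -> connect (dist2 X) a b) ->
  forall a b, a \in x |: X -> b \in x |: X -> connect (dist2 (x |: X)) a b.
Proof.
move=> w0X xw0 conn.
have from_x a : a \in x |: X -> connect (dist2 (x |: X)) x a.
  case/setU1P => [->|aX]; first exact: connect0.
  apply: connect_trans (connect1 xw0) _; move: (conn _ _ w0X aX).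
  by apply: connect_sub; apply: dist2_sub; apply: subsetUr.
move=> a b aX bX; apply: connect_trans (from_x b bX).
by rewrite (sym_connect_sym (dist2_sym _)) from_x.
Qed.

Lemma pendant_nbr_eq (W : {set V}) x y u : nbrs e W x = [set y] -> u \in W -> e x u -> u = y.
Proof.
move=> E uW xu; have : u \in nbrs e W x by rewrite nbrsE uW xu.
by rewrite E inE => /eqP.
Qed.

Lemma pendant_edge (W : {set V}) x y : nbrs e W x = [set y] -> (y \in W) && e x y.
Proof. by move=> E; rewrite -nbrsE E inE. Qed.

Lemma pairing_fixed (W D : {set V}) p a : pairing e D W p -> a \notin W -> p a = a.
Proof.
by case=> _ edge _ aW; apply/eqP; apply: contraT => /edge /andP[aW' _]; rewrite aW' in aW.
Qed.

Definition pair_swap (x y : V) (p : V -> V) a :=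
  if a == x then y else if a == y then x else p a.

Lemma pairing_swap (W W' D D' : {set V}) p' x y :
  pairing e D' W' p' -> p' x = x -> p' y = y -> x \in W -> y \in W -> e x y ->
  W' \subset W ->
  (forall v, v \in W -> v \notin D -> v != x -> v != y -> (v \in W') && (v \notin D')) ->
  pairing e D W (pair_swap x y p').
Proof.
case=> inv edge cover px py xW yW exy WW' Hv.
have xy : x != y by apply: contraTneq exy => ->; rewrite eirr.
have px' a : p' a = x -> a = x by move=> E; rewrite -(inv a) E px.
have py' a : p' a = y -> a = y by move=> E; rewrite -(inv a) E py.
split.
- move=> a; rewrite /pair_swap.
  have [->|ax] := eqVneq a x; first by rewrite eq_sym (negbTE xy) eqxx.
  have [->|ay] := eqVneq a y; first by rewrite eqxx.
  have [/px' E|pax] := eqVneq (p' a) x; first by rewrite E eqxx in ax.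
  have [/py' E|pay] := eqVneq (p' a) y; first by rewrite E eqxx in ay.
  by rewrite inv.
- move=> a; rewrite /pair_swap.
  have [->|ax] := eqVneq a x; first by rewrite xW exy.
  have [->|ay] := eqVneq a y; first by rewrite yW esym exy.
  by move=> /edge /andP[aW ->]; rewrite (subsetP WW' _ aW).
- move=> v vW vD; rewrite /pair_swap.
  have [->|vx] := eqVneq v x; first by rewrite eq_sym.
  have [->|vy] := eqVneq v y; first by [].
  by case/andP: (Hv v vW vD vx vy) => ? ?; apply: cover.
Qed.

Lemma pairing_of_pendantD (W D : {set V}) x y p' :
  x \in W -> x \in D -> nbrs e W x = [set y] ->
  pairing e (y |: D) (W :\ x) p' -> exists p, pairing e D W p.
Proof.
move=> xW xD Nx Hp.
have /andP[yW exy] := pendant_edge Nx.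
have px : p' x = x by apply: (pairing_fixed Hp); rewrite !inE eqxx.
have [py|py] := eqVneq (p' y) y.
  exists (pair_swap x y p'); apply: (pairing_swap Hp) => //; first exact: subD1set.
  by move=> v vW vD vx vy; rewrite !inE vx vW negb_or vy vD.
exists p'; case: Hp => inv edge cover; split => //.
  by move=> a /edge /andP[aW ->]; move: aW; rewrite inE => /andP[_ ->].
move=> v vW vD; have [->//|vy] := eqVneq v y.
apply: cover; first by rewrite in_setD1 vW andbT; apply: contraNneq vD => ->.
by rewrite !inE negb_or vy.
Qed.

Lemma skeleton_of_pendantD (W D : {set V}) x y X :
  nbrs e W x = [set y] -> skeleton (W :\ x) (y |: D) X -> skeleton W D X.
Proof.
move=> Nx [sub ne Hnb conn]; split => //.
  apply: (subset_trans sub); apply/subsetP => v; rewrite !inE.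
  by rewrite negb_or => /and3P[/andP[_ ->] _ ->].
move=> a u aX uW au; have [Eu|ux] := eqVneq u x; last first.
  by apply: (Hnb a) => //; rewrite in_setD1 ux uW.
have aW : a \in W.
  by move: (subsetP sub _ aX); rewrite in_setD in_setD1 => /andP[_ /andP[_ ->]].
have ay : a = y by apply: (pendant_nbr_eq Nx aW); rewrite esym -Eu.
by move: (subsetP sub _ aX); rewrite ay !inE eqxx.
Qed.

Lemma skeleton1 (W D : {set V}) v : v \in W -> v \notin D -> nbrs e W v = set0 ->
  skeleton W D [set v].
Proof.
move=> vW vD N0; split.
- by apply/subsetP => u; rewrite !inE => /eqP ->; rewrite vW vD.
- by apply/set0Pn; exists v; rewrite inE.
- move=> x u; rewrite inE => /eqP -> uW vu.
  have : u \in nbrs e W v by rewrite nbrsE uW vu.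
  by rewrite N0 in_set0.
- by move=> a b; rewrite !inE => /eqP -> /eqP ->; apply: connect0.
Qed.

Lemma skeleton2 (W D : {set V}) x1 x2 y : x1 != x2 ->
  x1 \in W -> x2 \in W -> x1 \notin D -> x2 \notin D ->
  nbrs e W x1 = [set y] -> nbrs e W x2 = [set y] -> skeleton W D [set x1; x2].
Proof.
move=> x12 x1W x2W x1D x2D N1 N2.
have /andP[yW e1] := pendant_edge N1; have /andP[_ e2] := pendant_edge N2.
have y1 : y != x1 by apply: contraTneq e1 => ->; rewrite eirr.
have y2 : y != x2 by apply: contraTneq e2 => ->; rewrite eirr.
have Ny : nbrs e [set x1; x2] y = [set x1; x2].
  apply/setP => w; rewrite !inE; apply/andP/idP => [[]//|H]; split => //.
  by case/orP: H => /eqP ->; rewrite esym ?e1 ?e2.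
have r12 : dist2 [set x1; x2] x1 x2.
  rewrite /dist2 !inE !eqxx ?orbT x12 /=; apply/existsP; exists y; by rewrite e1 esym e2.
have r21 : dist2 [set x1; x2] x2 x1 by rewrite dist2_sym.
split.
- by apply/subsetP => u; rewrite !inE => /orP[] /eqP ->; rewrite ?x1W ?x2W ?x1D ?x2D.
- by apply/set0Pn; exists x1; rewrite !inE eqxx.
- move=> x u; rewrite !inE => /orP[] /eqP -> uW xu;
    by rewrite ?(pendant_nbr_eq N1 uW xu) ?(pendant_nbr_eq N2 uW xu) (negbTE y1) (negbTE y2)
      Ny cards2 x12.
- move=> a b; rewrite !inE => /orP[] /eqP -> /orP[] /eqP ->;
    by rewrite ?connect0 ?connect1.
Qed.

Definition pairing_or_skeleton (W D : {set V}) :=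
  (exists p, pairing e D W p) \/ (exists X, skeleton W D X).

Lemma skeleton_subset (W D X : {set V}) a : skeleton W D X -> a \in X ->
  (a \in W) && (a \notin D).
Proof. by case=> sub _ _ _ /(subsetP sub); rewrite in_setD andbC. Qed.

Section PendantPath.
Variables (W D X : {set V}) (x y : V).
Hypotheses (xW : x \in W) (xD : x \notin D) (Nx : nbrs e W x = [set y]).
Hypothesis skX : skeleton (W :\ x :\ y) D X.

Let exy : e x y. Proof. by case/andP: (pendant_edge Nx). Qed.

Let X_in a : a \in X -> [/\ a \in W, a != x, a != y & a \notin D].
Proof. by move/(skeleton_subset skX); rewrite !in_setD1 => /andP[/and3P[-> -> ->] ->]. Qed.

Let notX_nbr_x a u : a \in X -> e a u -> u != x.
Proof.
move=> /X_in[aW _ ay _] au; apply: contraNneq ay => ux.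
by apply/eqP; apply: (pendant_nbr_eq Nx aW); rewrite esym -ux.
Qed.

Lemma skeleton_of_pendant_path : [forall w in X, ~~ e y w] -> skeleton W D X.
Proof.
move=> /forall_inP nyX; case: skX => sub ne Hnb conn; split => //.
  apply/subsetP => v vX; have [vW _ _ vD] := X_in vX; by rewrite in_setD vW vD.
move=> a u aX uW au; have [Eu|uy] := eqVneq u y.
  by move: (nyX a aX); rewrite esym -Eu au.
by apply: (Hnb a) => //; rewrite !in_setD1 uy (notX_nbr_x aX au) uW.
Qed.

Lemma skeleton_add_pendant w0 : w0 \in X -> e y w0 -> #|nbrs e (W :\ x) y| <= 1 ->
  skeleton W D (x |: X).
Proof.
move=> w0X yw0 Hy; case: skX => sub ne Hnb conn.
have [w0W w0x _ _] := X_in w0X.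
have xX : x \notin X by apply/negP => /X_in[_ /eqP].
have Ny : nbrs e (x |: X) y = [set x; w0].
  apply/setP => w; rewrite !inE; apply/idP/idP; last first.
    by case/orP => /eqP ->; rewrite ?eqxx ?w0X ?orbT ?yw0 // esym exy.
  case/andP => /orP[->//|wX] yw; apply/orP; right; apply/eqP.
  have [wW wx _ _] := X_in wX.
  by apply: (card_le1_eqP Hy); rewrite nbrsE in_setD1 ?wx ?wW ?w0x ?w0W.
have yx : y != x by apply: contraTneq exy => ->; rewrite eirr.
have yX : y \notin X by apply/negP => /X_in[_ _ /eqP].
have yok : (y \notin x |: X) && (#|nbrs e (x |: X) y| == 2).
  by rewrite Ny cards2 (eq_sym x) w0x in_setU1 negb_or yx yX.
split.
- apply/subsetP => v /setU1P [->|/X_in[vW _ _ vD]]; by rewrite in_setD ?xW ?xD ?vW ?vD.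
- by apply/set0Pn; exists x; rewrite setU11.
- move=> a u /setU1P [->|aX] uW au; first by rewrite (pendant_nbr_eq Nx uW au).
  have [->//|uy] := eqVneq u y.
  have ux := notX_nbr_x aX au.
  have /andP[uX c2] : (u \notin X) && (#|nbrs e X u| == 2).
    by apply: (Hnb a) => //; rewrite !in_setD1 ux uy uW.
  rewrite in_setU1 negb_or ux uX -(eqP c2); apply/eqP; congr #|pred_of_set _|.
  apply/setP => w; rewrite !nbrsE in_setU1; have [->|] //= := eqVneq w x.
  rewrite (negbTE xX); apply/negbTE; apply: contra uy => uxe.
  by apply/eqP; apply: (pendant_nbr_eq Nx uW); rewrite esym.
- apply: (dist2_connect_setU1 w0X _ conn).
  rewrite /dist2 setU11 in_setU1 w0X orbT eq_sym w0x /=.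
  by apply/existsP; exists y; rewrite exy yw0.
Qed.

End PendantPath.

Lemma pairing_or_skeleton_low_degree (W D : {set V}) :
  (forall v, v \in W -> #|nbrs e W v| <= 1) -> pairing_or_skeleton W D.
Proof.
move=> deg1.
have [/exists_inP [v vWD /eqP N0] | nex] := boolP [exists v in W :\: D, nbrs e W v == set0].
  by right; exists [set v]; move: vWD; rewrite in_setD => /andP[vD vW]; apply: skeleton1.
left; pose p a := if a \in W then odflt a [pick u in nbrs e W a] else a.
have p_nbr a u : a \in W -> u \in nbrs e W a -> p a = u.
  move=> aW uN; rewrite /p aW; case: pickP => [w wN|N0] /=.
    by apply: (card_le1_eqP (deg1 a aW)).
  by move: (N0 u); rewrite uN.
have p_isolated a : nbrs e W a = set0 -> p a = a.
  by move=> N0; rewrite /p; case: (a \in W) => //; case: pickP => [w|] //=; rewrite N0 inE.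
have p_out a : a \notin W -> p a = a by move=> /negbTE aW; rewrite /p aW.
exists p; split.
- move=> a; have [aW|aW] := boolP (a \in W); last by rewrite !p_out.
  have [N0|[u uN]] := set_0Vmem (nbrs e W a); first by rewrite !p_isolated.
  rewrite (p_nbr a u aW uN); move: uN; rewrite nbrsE => /andP[uW au].
  by apply: p_nbr => //; rewrite nbrsE aW esym.
- move=> a; have [aW|aW] := boolP (a \in W); last by rewrite p_out ?eqxx.
  have [N0|[u uN]] := set_0Vmem (nbrs e W a); first by rewrite p_isolated ?eqxx.
  by rewrite (p_nbr a u aW uN); move: uN; rewrite nbrsE => /andP[_ ->].
- move=> v vW vD; have [N0|[u uN]] := set_0Vmem (nbrs e W v).
    by move: nex => /exists_inPn /(_ v); rewrite in_setD vD vW N0 eqxx => /(_ isT).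
  rewrite (p_nbr v u vW uN); move: uN; rewrite nbrsE => /andP[_ vu].
  by apply: contraTneq vu => ->; rewrite eirr.
Qed.

Lemma pairing_or_skeleton_of_pendantD (W D : {set V}) x y :
  x \in W -> x \in D -> nbrs e W x = [set y] ->
  pairing_or_skeleton (W :\ x) (y |: D) -> pairing_or_skeleton W D.
Proof.
move=> xW xD Nx [[p Hp]|[X HX]]; first by left; apply: pairing_of_pendantD Hp.
by right; exists X; apply: skeleton_of_pendantD HX.
Qed.

Lemma pairing_or_skeleton_of_pendant_path (W D : {set V}) x y :
  x \in W -> x \notin D -> nbrs e W x = [set y] -> #|nbrs e (W :\ x) y| <= 1 ->
  pairing_or_skeleton (W :\ x :\ y) D -> pairing_or_skeleton W D.
Proof.
move=> xW xD Nx Hy [[p Hp]|[X HX]].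
  have /andP[yW exy] := pendant_edge Nx.
  have xy : x != y by apply: contraTneq exy => ->; rewrite eirr.
  left; exists (pair_swap x y p); apply: (pairing_swap Hp) => //.
  - by apply: (pairing_fixed Hp); rewrite !in_setD1 eqxx andbF.
  - by apply: (pairing_fixed Hp); rewrite !in_setD1 eqxx.
  - by apply/subsetP => v; rewrite !in_setD1 => /and3P[].
  - by move=> v vW vD vx vy; rewrite !in_setD1 vx vy vW vD.
right; have [/exists_inP [w0 w0X yw0]|/exists_inPn nyX] := boolP [exists w in X, e y w].
  by exists (x |: X); apply: skeleton_add_pendant yw0 Hy.
by exists X; apply: (skeleton_of_pendant_path Nx HX); apply/forall_inP.
Qed.

Lemma pendant_of_low_degree (W : {set V}) y u : y \in W -> u \in W -> e y u ->
  #|nbrs e W u| <= 1 -> nbrs e W u = [set y].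
Proof.
move=> yW uW yu H1; apply/setP => w; rewrite inE.
have yN : y \in nbrs e W u by rewrite nbrsE yW esym.
by apply/idP/eqP => [wN|->//]; apply: (card_le1_eqP H1).
Qed.

Definition branching (W : {set V}) := [set v in W | 1 < #|nbrs e W v|].

Definition pendants (W : {set V}) y := nbrs e W y :\: branching W.

Lemma pendants_nbrs (W : {set V}) y u : y \in W -> u \in pendants W y ->
  u \in W /\ nbrs e W u = [set y].
Proof.
move=> yW /setDP [/[!nbrsE] /andP[uW yu] uB]; split => //.
by apply: pendant_of_low_degree => //; move: uB; rewrite inE uW -leqNgt.
Qed.

Lemma nbrs_sub_branching (W : {set V}) y :
  nbrs e W y :\: pendants W y \subset nbrs e (branching W) y.
Proof.
apply/subsetP => u /setDP [uN uL]; have /[!nbrsE] /andP[uW yu] := uN.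
have uB : u \in branching W by apply: contraR uL => uB; rewrite in_setD uB uN.
by rewrite uB yu.
Qed.

Lemma pendants_neq0 (W : {set V}) y : y \in branching W ->
  #|nbrs e (branching W) y| <= 1 -> pendants W y != set0.
Proof.
rewrite inE => /andP[_ degy] Hy; apply: contraTneq degy => L0.
rewrite -leqNgt (leq_trans _ Hy) //.
by apply: leq_trans (subset_leq_card (nbrs_sub_branching W y)); rewrite L0 setD0.
Qed.

Lemma nbrs_pendant_removed (W : {set V}) x y : #|pendants W y| <= 1 ->
  x \in pendants W y -> #|nbrs e (W :\ x) y| <= #|nbrs e (branching W) y|.
Proof.
move=> L1 xL; apply: leq_trans (subset_leq_card (nbrs_sub_branching W y)).
apply/subset_leq_card/subsetP => u; rewrite nbrsE in_setD1 => /andP[/andP[ux uW] yu].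
rewrite in_setD nbrsE uW yu !andbT; apply: contra ux => uL; apply/eqP.
exact: (card_le1_eqP L1).
Qed.

Lemma pairing_or_skeleton_forest n (W D : {set V}) : #|W| <= n -> pairing_or_skeleton W D.
Proof.
elim: n W D => [|n IH] W D Wn.
  left; exists id; split => // [a|v]; first by rewrite eqxx.
  by move: Wn; rewrite leqn0 cards_eq0 => /eqP ->; rewrite inE.
have [B0|] := eqVneq (branching W) set0.
  apply: pairing_or_skeleton_low_degree => // v vW; rewrite leqNgt; apply/negP => H.
  have : v \in branching W by rewrite inE vW H.
  by rewrite B0 inE.
(* [y] is a leaf of the forest induced on the branching vertices *)
move=> /(forest_leaf esym eirr eacyc) [y yB Hy].
have yW : y \in W by move: yB; rewrite inE => /andP[].
have [/exists_inP [x xL xD]|/exists_inPn nD] := boolP [exists x in pendants W y, x \in D].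
  have [xW Nx] := pendants_nbrs yW xL.
  apply: (pairing_or_skeleton_of_pendantD xW xD Nx); apply: IH.
  by move: Wn; rewrite (cardsD1 x) xW.
have [/card_gt1P [x1 [x2 [x1L x2L x12]]]|L1] := boolP (1 < #|pendants W y|).
  have [x1W N1] := pendants_nbrs yW x1L; have [x2W N2] := pendants_nbrs yW x2L.
  by right; exists [set x1; x2]; apply: (skeleton2 x12 _ _ _ _ N1 N2); rewrite ?nD.
have [x xL] := set0Pn _ (pendants_neq0 yB Hy); have [xW Nx] := pendants_nbrs yW xL.
apply: (pairing_or_skeleton_of_pendant_path xW (nD x xL) Nx).
  by apply: leq_trans Hy; apply: nbrs_pendant_removed xL; rewrite leqNgt.
have xy : x != y.
  by have /andP[_ exy] := pendant_edge Nx; apply: contraTneq exy => ->; rewrite eirr.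
apply: IH; move: Wn; rewrite (cardsD1 x W) xW (cardsD1 y (W :\ x)) in_setD1 eq_sym xy yW.
by rewrite !add1n ltnS => /ltnW.
Qed.

End Dichotomy.

Section SkeletonSubdivision.
Variables (V : finType) (e : rel V) (D X : {set V}).
Hypotheses (esym : symmetric e) (eirr : irreflexive e) (eacyc : acyclic_graph e).
Hypothesis skX : skeleton e setT D X.

Lemma skeleton_nbr x u : x \in X -> e x u -> (u \notin X) && (#|nbrs e X u| == 2).
Proof. by case: skX => _ _ Hnb _ xX xu; apply: (Hnb x) => //; rewrite inE. Qed.

Lemma skeleton_other_nbr_uniq m c w1 w2 : c \in X -> e c m -> w1 \in X -> w2 \in X ->
  e m w1 -> e m w2 -> w1 != c -> w2 != c -> w1 = w2.
Proof.
move=> cX cm w1X w2X m1 m2 n1 n2.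
have /andP[_ /eqP c2] := skeleton_nbr cX cm.
have cN : c \in nbrs e X m by rewrite nbrsE cX esym.
have : #|nbrs e X m :\ c| <= 1 by move: c2; rewrite (cardsD1 c) cN add1n => -[->].
by move/card_le1_eqP; apply; rewrite in_setD1 nbrsE ?n1 ?n2 ?w1X ?w2X ?m1 ?m2.
Qed.

Definition skel := {x : V | x \in X}.
Definition skel_rel : rel skel := fun a b => dist2 e X (val a) (val b).

Lemma skel_rel_sym : symmetric skel_rel.
Proof. by move=> a b; rewrite /skel_rel dist2_sym. Qed.

Lemma skel_rel_irr : irreflexive skel_rel.
Proof. by move=> a; rewrite /skel_rel /dist2 eqxx /= !andbF. Qed.

Definition midpoint (a b : V) : V := odflt a [pick u | e a u && e u b].

Lemma skel_rel_midpoint a b : skel_rel a b ->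
  [/\ val a != val b, e (val a) (midpoint (val a) (val b)) &
      e (midpoint (val a) (val b)) (val b)].
Proof.
case/and4P => _ _ ab /existsP[u uab].
have : e (val a) (midpoint (val a) (val b)) && e (midpoint (val a) (val b)) (val b).
  by rewrite /midpoint; case: pickP => [w -> //|/(_ u)]; rewrite uab.
by case/andP.
Qed.

Definition skel_embed (z : skel + sub_edge skel_rel) : V :=
  match z with
  | inl a => val a
  | inr p => midpoint (val (val p).1) (val (val p).2)
  end.

Local Notation M p := (skel_embed (inr p)).

Lemma skel_embed_edge (p : sub_edge skel_rel) :
  e (val (val p).1) (M p) && e (M p) (val (val p).2).
Proof. by case: (skel_rel_midpoint (edge_rel p)) => _ -> ->. Qed.

Lemma skel_embed_inr_notin p : M p \notin X.
Proof.
by case/andP: (skel_embed_edge p) => /(skeleton_nbr (valP (val p).1)) /andP[].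
Qed.

Lemma skel_embed_edges_at q a : q \in edges_at skel_rel a ->
  e (val a) (M q) && e (val (other_end q a)) (M q).
Proof.
have /andP[h1 h2] := skel_embed_edge q.
by case/(edges_at_ends skel_rel_irr) => [[<- <-]|[<- <-]]; rewrite h1 esym h2.
Qed.

Lemma skel_embed_inj : injective skel_embed.
Proof.
have vneq (a b : skel) : a != b -> val a != val b by apply: contra => /eqP /val_inj ->.
case=> [a|p] [b|q] /=.
- by move/val_inj ->.
- by move=> E; have := skel_embed_inr_notin q; rewrite /= -E (valP a).
- by move=> E; have := skel_embed_inr_notin p; rewrite /= E (valP b).
move=> E0; have E : M p = M q := E0; clear E0.
set a := (val p).1; have pa : p \in edges_at skel_rel a by rewrite inE eqxx.
have aX : val a \in X := valP a.
have /andP[am _] := skel_embed_edges_at pa.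
have uniq_other (b c : skel) : e (M p) (val b) -> e (M p) (val c) -> b != a -> c != a -> b = c.
  move=> mb mc ba ca; apply: val_inj.
  by apply: (skeleton_other_nbr_uniq aX am (valP _) (valP _) mb mc); apply: vneq.
have /andP[q1 q2] := skel_embed_edge q; rewrite -E in q1 q2.
have qa : q \in edges_at skel_rel a.
  rewrite inE; apply: contraT => /norP [n1 n2].
  have := edge_rel q; rewrite (uniq_other (val q).1 (val q).2) ?skel_rel_irr //.
  - by rewrite esym.
  - by rewrite eq_sym.
  - by rewrite eq_sym.
congr inr; apply: (edges_at_inj skel_rel_irr pa qa); apply: uniq_other.
- by rewrite esym; case/andP: (skel_embed_edges_at pa).
- by rewrite E esym; case/andP: (skel_embed_edges_at qa).
- exact: other_end_neq skel_rel_sym skel_rel_irr _ _ pa.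
- exact: other_end_neq skel_rel_sym skel_rel_irr _ _ qa.
Qed.

Lemma skel_embed_adj x y : sdiv_rel x y -> e (skel_embed x) (skel_embed y).
Proof.
case: x => [a|p]; case: y => [b|q] //= H.
  have qa : q \in edges_at skel_rel a by rewrite inE.
  by case/andP: (skel_embed_edges_at qa).
have pb : p \in edges_at skel_rel b by rewrite inE.
by rewrite esym; case/andP: (skel_embed_edges_at pb).
Qed.

Lemma skel_embed_deg a :
  deg e (skel_embed (inl a)) = deg (@sdiv_rel skel skel_rel) (inl a).
Proof.
rewrite /deg sdiv_nbrs_inl card_imset; last by move=> x y [].
suff -> : [set u | e (val a) u] = [set M q | q in edges_at skel_rel a].
  by rewrite card_imset // => p q /skel_embed_inj [].
apply/setP => u; rewrite inE; apply/idP/imsetP => [au|[q qa ->]]; last first.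
  by case/andP: (skel_embed_edges_at qa).
have aX : val a \in X := valP a.
have /andP[_ /eqP c2] := skeleton_nbr aX au.
have aN : val a \in nbrs e X u by rewrite nbrsE aX esym.
have : 0 < #|nbrs e X u :\ val a| by move: c2; rewrite (cardsD1 (val a)) aN add1n => -[->].
case/card_gt0P => b'; rewrite in_setD1 nbrsE => /and3P[b'a b'X ub'].
pose b : skel := Sub b' b'X.
have rab : skel_rel a b.
  by rewrite /skel_rel /dist2 aX b'X eq_sym b'a; apply/existsP; exists u; rewrite au ub'.
have [q qa oq] := edges_at_exists skel_rel_sym skel_rel_irr rab.
exists q => //; have /andP[h1 h2] := skel_embed_edges_at qa.
rewrite oq in h2; symmetry.
by apply: (forest_common_nbr_uniq esym eirr eacyc _ h1 _ au ub') => //; rewrite 1?esym // eq_sym.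
Qed.

(* If every vertex of [R] had two [skel]-neighbours in [R], then every vertex of
   [R] and every midpoint of an edge inside [R] would have two [e]-neighbours
   among these vertices, contradicting [forest_leaf]. *)
Lemma skel_leaf (R : {set skel}) : R != set0 ->
  exists2 a, a \in R & #|nbrs skel_rel R a| <= 1.
Proof.
move=> R0.
have [/exists_inP[a aR H]|/exists_inPn deg2] :=
  boolP [exists a in R, #|nbrs skel_rel R a| <= 1]; first by exists a.
exfalso.
pose Re := val @: R :|: [set midpoint (val a) (val b) | a in R, b in nbrs skel_rel R a].
have Re0 : Re != set0.
  by case/set0Pn: R0 => a aR; apply/set0Pn; exists (val a); rewrite inE imset_f.
have [v vR] := forest_leaf esym eirr eacyc Re0; apply/negP; rewrite -ltnNge.
apply/card_gt1P; case/setUP: vR => [/imsetP[a aR ->]|/imset2P[a b aR bN ->]].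
  have := deg2 a aR; rewrite -ltnNge => /card_gt1P [b1 [b2 [b1N b2N b12]]].
  have mid_in b : b \in nbrs skel_rel R a -> midpoint (val a) (val b) \in nbrs e Re (val a).
    move=> bN; rewrite nbrsE in_setU (imset2_f (fun a b => midpoint (val a) (val b))) ?orbT //=.
    by move: bN; rewrite nbrsE => /andP[_ /skel_rel_midpoint[]].
  exists (midpoint (val a) (val b1)), (midpoint (val a) (val b2)); rewrite !mid_in //.
  move: b1N b2N; rewrite !nbrsE => /andP[_ r1] /andP[_ r2].
  have [n1 e1 f1] := skel_rel_midpoint r1; have [n2 e2 f2] := skel_rel_midpoint r2.
  split => //; apply: contra b12 => /eqP Em; apply/eqP/val_inj.
  by apply: (skeleton_other_nbr_uniq (valP a) e1 (valP _) (valP _) f1); rewrite 1?eq_sym ?Em.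
move: bN; rewrite nbrsE => /andP[bR rab]; have [nab am mb] := skel_rel_midpoint rab.
by exists (val a), (val b); rewrite !nbrsE !inE !imset_f // esym am mb.
Qed.

Lemma skel_connect_path (s : seq V) (a : skel) : path (dist2 e X) (val a) s ->
  forall b : skel, val b = last (val a) s -> connect skel_rel a b.
Proof.
elim: s a => [|y s IH] a /=; first by move=> _ b /val_inj ->; apply: connect0.
case/andP => ay P b Eb; have yX : y \in X by case/and4P: ay.
have ray : skel_rel a (Sub y yX) by [].
apply: connect_trans (connect1 ray) _; exact: IH.
Qed.

Lemma skel_tree : is_tree skel_rel.
Proof.
case: skX => _ ne _ conn; split.
- by split; [exact: skel_rel_sym | exact: skel_rel_irr].
- by case/set0Pn: ne => x xX; apply/card_gt0P; exists (Sub x xX : skel).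
- move=> a b; have := conn (val a) (val b) (valP a) (valP b).
  by case/connectP => s P L; apply: (skel_connect_path P).
- by apply: acyclic_of_leaves; [exact: skel_rel_sym | exact: skel_leaf].
Qed.

Lemma substructure_of_skeleton : exists (A : finType) (r : rel A) (h : A + sub_edge r -> V),
  S_substructure e h /\ [set h (inl a) | a : A] :&: D = set0.
Proof.
exists skel, skel_rel, skel_embed; split.
  split; [exact: skel_tree | exact: skel_embed_inj | exact: skel_embed_adj | exact: skel_embed_deg].
apply/setP => v; rewrite !inE; apply/andP => [[/imsetP [a _ ->] vD]].
by have /andP[_] := skeleton_subset skX (valP a); rewrite /= vD.
Qed.

End SkeletonSubdivision.

Theorem theorem4p5 (V : finType) (e : rel V) (D : {set V}) :
  is_tree e ->
  staller_wins_MBD e D <->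
  exists (A : finType) (r : rel A) (h : A + sub_edge r -> V),
    S_substructure e h /\ [set h (inl a) | a : A] :&: D = set0.
Proof.
case=> [[esym eirr] _ _ eacyc]; split => [Hw|].
  have cardT : #|[set: V]| <= #|V| by rewrite cardsT.
  case: (pairing_or_skeleton_forest esym eirr eacyc D cardT) => [[p Hp]|[X skX]].
    by move: (pairing_dominator_wins Hp); rewrite Hw.
  exact: substructure_of_skeleton esym eirr eacyc skX.
case=> A [r [h [[[[rsym rirr] A0 _ racyc] hinj hadj hdeg] disjD]]].
apply: (staller_wins_of_substructure rsym rirr racyc hinj hadj hdeg _ A0) => a.
apply/negP => aD; have : h (inl a) \in [set h (inl a) | a : A] :&: D by rewrite inE imset_f.
by rewrite disjD inE.
Qed.
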